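(* Let $\mathbb{F}\in\{\mathbb{R},\mathbb{C}\}$, $A\in\mathbb{F}^{m\times n}$, $b\in\mathbb{F}^m$, $f:\mathbb{F}^n\to[0,\infty]$ and $K\ge1$. Let $x',x''$ be distinct stationary points of $\mathcal{K}_{reg}(x)=\mathcal{Q}_2(f)(x)+\|Ax-b\|_2^2$ such that $x''-x'\in P_K$, and set $z'=(I-A^*A)x'+A^*b$, $z''=(I-A^*A)x''+A^*b$. Then $$\mathrm{Re}\langle z''-z',x''-x'\rangle\le(1-\beta_K^2)\|x''-x'\|_2^2.$$
   Context: $\mathcal{Q}_2(f)$ is the quadratic envelope of $f$: $\mathcal{Q}_2(f)(x)=\breve h(x)-\|x\|^2$, where $\breve h$ is the lower semicontinuous convex envelope of $h(x)=f(x)+\|x\|^2$. $\mathrm{card}(x)$ is the number of nonzero entries, $P_K=\{x:\mathrm{card}(x)\le K\}$, $\beta_K=\inf\{\|Ax\|_2/\|x\|_2:x\ne0,\ x\in P_K\}$. $A^*$ is the conjugate transpose, $\langle x,y\rangle=\sum_i x_i\overline{y_i}$. A stationary point of a function $g$ is a point $x$ with $0$ in the Fréchet subdifferential $\hat\partial g(x)$, i.e. the set of $v$ with $\liminf_{y\to x,y\ne x}(g(y)-g(x)-\mathrm{Re}\langle v,y-x\rangle)/\|y-x\|\ge0$. *)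

From HB Require Import structures.
From mathcomp Require Import all_boot all_order all_algebra.
From mathcomp Require Import all_classical all_reals.
From mathcomp Require Import ereal.
From mathcomp Require Import complex.
Set Implicit Arguments. Unset Strict Implicit. Unset Printing Implicit Defensive.
Import Order.TTheory GRing.Theory Num.Theory.
Local Open Scope ring_scope.
Local Open Scope classical_set_scope.

(* Generic setting: the scalar field F is either R or C = R[i]; it is given
   together with its real part  re : F -> R, its conjugation  cj : F -> F and
   the embedding  ofR : R -> F  of the reals. *)
Section Generic.
Variables (R : realType) (F : nzRingType) (re : F -> R) (cj : F -> F)
  (ofR : R -> F).

Definition redot n (x y : 'cV[F]_n) : R := re (\sum_i x i 0 * cj (y i 0)).
Definition nrm n (x : 'cV[F]_n) : R := Num.sqrt (redot x x).
Definition adj m n (A : 'M[F]_(m, n)) : 'M[F]_(n, m) := map_mx cj A^T.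
Definition card n (x : 'cV[F]_n) : nat := #|[set i : 'I_n | x i 0 != 0]|.
Definition PK n (K : nat) : set 'cV[F]_n := [set x | (card x <= K)%N].
Definition betaK m n (A : 'M[F]_(m, n)) (K : nat) : R :=
  inf [set nrm (A *m x) / nrm x | x in [set x | x != 0 /\ PK K x]].

Definition convex_fun n (g : 'cV[F]_n -> \bar R) : Prop :=
  forall (x y : 'cV[F]_n) (t : R), 0 <= t <= 1 ->
    (g (ofR t *: x + ofR (1 - t) *: y)%R <= t%:E * g x + (1 - t)%:E * g y)%E.
Definition lsc_fun n (g : 'cV[F]_n -> \bar R) : Prop :=
  forall x (a : R), (a%:E < g x)%E ->
    exists2 d : R, 0 < d & forall y, nrm (y - x) < d -> (a%:E < g y)%E.
Definition lsc_conv_env n (h : 'cV[F]_n -> \bar R) (x : 'cV[F]_n) : \bar R :=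
  ereal_sup [set g x | g in
    [set g : 'cV[F]_n -> \bar R | [/\ convex_fun g, lsc_fun g,
        (forall y, -oo < g y)%E & (forall y, g y <= h y)%E]]].
Definition Q2 n (f : 'cV[F]_n -> \bar R) (x : 'cV[F]_n) : \bar R :=
  (lsc_conv_env (fun y => f y + (nrm y ^+ 2)%:E) x - (nrm x ^+ 2)%:E)%E.
Definition Kreg m n (f : 'cV[F]_n -> \bar R) (A : 'M[F]_(m, n)) (b : 'cV[F]_m)
  (x : 'cV[F]_n) : \bar R := (Q2 f x + (nrm (A *m x - b) ^+ 2)%:E)%E.

(* Frechet subdifferential: v in  hat-partial g(x)  iff g(x) is finite and
   liminf_{y -> x, y <> x} (g y - g x - Re<v, y - x>) / ||y - x|| >= 0
   (the liminf condition written out in epsilon-delta form). *)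
Definition frechet_subdiff n (g : 'cV[F]_n -> \bar R) (x v : 'cV[F]_n) : Prop :=
  g x \is a fin_num /\
  forall e : R, 0 < e -> exists2 d : R, 0 < d & forall y,
    0 < nrm (y - x) < d ->
    (g x + (redot v (y - x) - e * nrm (y - x))%:E <= g y)%E.
Definition stationary n (g : 'cV[F]_n -> \bar R) (x : 'cV[F]_n) : Prop :=
  frechet_subdiff g x 0.

Definition prop31_claim : Prop :=
  forall (m n : nat) (A : 'M[F]_(m, n)) (b : 'cV[F]_m)
         (f : 'cV[F]_n -> \bar R) (K : nat) (x' x'' : 'cV[F]_n),
    (forall x, (0 <= f x)%E) -> (1 <= K)%N ->
    x' != x'' ->
    stationary (Kreg f A b) x' -> stationary (Kreg f A b) x'' ->
    PK K (x'' - x') ->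
    let z' := (1%:M - adj A *m A) *m x' + adj A *m b in
    let z'' := (1%:M - adj A *m A) *m x'' + adj A *m b in
    redot (z'' - z') (x'' - x') <= (1 - betaK A K ^+ 2) * nrm (x'' - x') ^+ 2.

End Generic.

Definition prop31_real (R : realType) : Prop :=
  @prop31_claim R R id id id.
Definition prop31_complex (R : realType) : Prop :=
  @prop31_claim R (complex.complex R) (@complex.Re R) (@complex.conjc R)
    (fun r => complex.real_complex_def (Phant R) r).

(* Since z'' - z' = (I - A^* A) d with d = x'' - x', one has
   Re <z'' - z', d> = ||d||^2 - ||A d||^2.  As d lies in P_K, the definition of
   beta_K gives ||A d|| >= beta_K ||d||, whence the bound. *)
From mathcomp Require Import all_boot all_order all_algebra.
From mathcomp Require Import all_classical all_reals.
From mathcomp Require Import complex lra.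
Set Implicit Arguments. Unset Strict Implicit. Unset Printing Implicit Defensive.
Import Order.TTheory GRing.Theory Num.Theory.
Local Open Scope ring_scope.
Local Open Scope classical_set_scope.

Section ScalarField.
Variables (R : realType) (F : comNzRingType) (re : F -> R) (cj : F -> F)
  (ofR : R -> F).
Hypothesis reD : {morph re : x y / x + y}.
Hypothesis cjD : {morph cj : x y / x + y}.
Hypothesis cjM : {morph cj : x y / x * y}.
Hypothesis re_mul_cj_ge0 : forall x, 0 <= re (x * cj x).

Lemma re0 : re 0 = 0.
Proof. by apply: (addrI (re 0)); rewrite -reD !addr0. Qed.

Lemma cj0 : cj 0 = 0.
Proof. by apply: (addrI (cj 0)); rewrite -cjD !addr0. Qed.

Lemma reB x y : re (x - y) = re x - re y.
Proof. by apply: (addIr (re y)); rewrite -reD !subrK. Qed.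

Lemma re_sum I (r : seq I) (P : pred I) (G : I -> F) :
  re (\sum_(i <- r | P i) G i) = \sum_(i <- r | P i) re (G i).
Proof. exact: (big_morph re reD re0). Qed.

Lemma cj_sum I (r : seq I) (P : pred I) (G : I -> F) :
  cj (\sum_(i <- r | P i) G i) = \sum_(i <- r | P i) cj (G i).
Proof. exact: (big_morph cj cjD cj0). Qed.

Local Notation redot := (redot re cj).
Local Notation nrm := (nrm re cj).

Lemma redotBl n (u v w : 'cV[F]_n) : redot (u - v) w = redot u w - redot v w.
Proof.
rewrite /redot -reB -sumrB; congr re; apply: eq_bigr => i _.
by rewrite !mxE mulrBl.
Qed.

Lemma redotxx_ge0 n (u : 'cV[F]_n) : 0 <= redot u u.
Proof. by rewrite /redot re_sum; apply: sumr_ge0. Qed.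

Lemma redot_adjl m n (A : 'M[F]_(m, n)) (y : 'cV[F]_m) (x : 'cV[F]_n) :
  redot (adj cj A *m y) x = redot y (A *m x).
Proof.
rewrite /redot; congr re.
under eq_bigr => i _ do rewrite !mxE big_distrl /=.
rewrite exchange_big /=; apply: eq_bigr => j _.
rewrite !mxE cj_sum big_distrr /=; apply: eq_bigr => i _.
by rewrite !mxE cjM mulrA [cj _ * _]mulrC.
Qed.

Lemma nrm_ge0 n (u : 'cV[F]_n) : 0 <= nrm u.
Proof. exact: sqrtr_ge0. Qed.

Lemma sqr_nrm n (u : 'cV[F]_n) : nrm u ^+ 2 = redot u u.
Proof. by rewrite sqr_sqrtr // redotxx_ge0. Qed.

Lemma redot_id_sub_adj m n (A : 'M[F]_(m, n)) (x : 'cV[F]_n) :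
  redot ((1%:M - adj cj A *m A) *m x) x = nrm x ^+ 2 - nrm (A *m x) ^+ 2.
Proof. by rewrite mulmxBl mul1mx -mulmxA redotBl redot_adjl !sqr_nrm. Qed.

Section Beta.
Variables (m n : nat) (A : 'M[F]_(m, n)) (K : nat).

Let ratios := [set nrm (A *m x) / nrm x | x in [set x | x != 0 /\ PK K x]].

Lemma ratios_ge0 : lbound ratios 0.
Proof. by move=> _ [x _ <-]; rewrite divr_ge0 // nrm_ge0. Qed.

Lemma betaK_ge0 (x : 'cV[F]_n) : x != 0 -> PK K x -> 0 <= betaK re cj A K.
Proof. by move=> x0 Kx; apply: lb_le_inf ratios_ge0; exists (nrm (A *m x) / nrm x), x. Qed.

Lemma betaK_mul_nrm_le (x : 'cV[F]_n) :
  x != 0 -> PK K x -> betaK re cj A K * nrm x <= nrm (A *m x).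
Proof.
move=> x0 Kx; have [->|nx0] := eqVneq (nrm x) 0; first by rewrite mulr0 nrm_ge0.
have nx_gt0 : 0 < nrm x by rewrite lt_def nx0 nrm_ge0.
rewrite -ler_pdivlMr //; apply: ge_inf; first by exists 0; exact: ratios_ge0.
by exists x.
Qed.

End Beta.

Lemma prop31_claim_generic : prop31_claim re cj ofR.
Proof.
move=> m n A b f K x' x'' _ _ x'_neq_x'' _ _ Kd /=.
set d := x'' - x'.
have d0 : d != 0 by rewrite subr_eq0 eq_sym.
rewrite opprD addrACA subrr addr0 -mulmxBr redot_id_sub_adj.
have B0 := betaK_ge0 A d0 Kd.
have Bd := betaK_mul_nrm_le A d0 Kd.
have : (betaK re cj A K * nrm d) ^+ 2 <= nrm (A *m d) ^+ 2.
  by rewrite ler_sqr ?nnegrE ?mulr_ge0 ?nrm_ge0.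
lra.
Qed.

End ScalarField.

Theorem proposition3p1 (R : realType) : prop31_real R /\ prop31_complex R.
Proof.
split.
- by apply: prop31_claim_generic => // x; exact: sqr_ge0.
- apply: prop31_claim_generic.
  + by move=> [a b] [c d].
  + exact: rmorphD.
  + exact: rmorphM.
  + by move=> [a b] /=; rewrite mulrN opprK addr_ge0 ?sqr_ge0.
Qed.
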